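(* Let $\mathcal N=(\mathcal V,\mathcal R)$ be a non-autocatalytic reaction network on $n$ species, let $\mathbf k\in\mathbb R_{>0}^{\mathcal R}$ be rate constants and $\boldsymbol\tau\in\mathbb R_{\ge 0}^{\mathcal R}$ delay parameters, and let $\mathbf x^*\in\mathbb R^n_{>0}$ be an equilibrium of the delay mass action system $\mathcal N_{\boldsymbol\tau,\mathbf k}$. Let $J_\lambda=J_\lambda(\mathbf x^*,\mathbf k,\boldsymbol\tau)$, $J=J(\mathbf x^*,\mathbf k)$ and $\tilde J=\tilde J(\mathbf x^*,\mathbf k)$ be the matrices defined in the context. Suppose $\det J\neq 0$, $\tilde J_{ii}<0$ for all $i$, and $-\tilde J$ is a $P_0$-matrix. Then every root $\lambda\in\mathbb C$ of the characteristic equation $\det(J_\lambda-\lambda I)=0$ has negative real part.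
   Context: A reaction network $\mathcal N=(\mathcal V,\mathcal R)$ is a finite directed graph whose vertices (complexes) are vectors $\mathbf y\in\mathbb R^n_{\ge 0}$; each edge $\mathbf y\to\mathbf y'$ is a reaction. Species are identified with the standard basis vectors $\mathbf e_1,\dots,\mathbf e_n$. A reaction $\mathbf y\to\mathbf y'$ is autocatalytic if $\mathrm{supp}(\mathbf y)\cap\mathrm{supp}(\mathbf y')\neq\emptyset$ and $y_i'>y_i$ for every $i\in\mathrm{supp}(\mathbf y)\cap\mathrm{supp}(\mathbf y')$; the network is non-autocatalytic if it has no autocatalytic reactions. For $\mathbf x\in\mathbb R^n_{>0}$, write $\mathbf x^{\mathbf y}=\prod_i x_i^{y_i}$. Given rate constants $k_{\mathbf y\to\mathbf y'}>0$ and delays $\tau_{\mathbf y\to\mathbf y'}\ge 0$ (one per reaction), the delay mass action system $\mathcal N_{\boldsymbol\tau,\mathbf k}$ is $\dot{\mathbf x}(t)=\sum_{\mathbf y\to\mathbf y'\in\mathcal R}k_{\mathbf y\to\mathbf y'}[\mathbf x(t-\tau_{\mathbf y\to\mathbf y'})]^{\mathbf y}\mathbf y'-\sum_{\mathbf y\to\mathbf y'\in\mathcal R}k_{\mathbf y\to\mathbf y'}[\mathbf x(t)]^{\mathbf y}\mathbf y$; an equilibrium is a constant solution $\mathbf x^*\in\mathbb R^n_{>0}$. For $\mathbf x\in\mathbb R^n_{>0}$ and $\lambda\in\mathbb C$, define $n\times n$ matrices with entries (row $j$, column $i$): $(J_\lambda)_{ji}=\sum_{\mathbf y\to\mathbf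 y'\in\mathcal R}k_{\mathbf y\to\mathbf y'}\mathbf x^{\mathbf y}\frac{y_i}{x_i}\big(y'_j e^{-\lambda\tau_{\mathbf y\to\mathbf y'}}-y_j\big)$; $J_{ji}=\sum_{\mathbf y\to\mathbf y'}k_{\mathbf y\to\mathbf y'}\mathbf x^{\mathbf y}\frac{y_i}{x_i}(y'_j-y_j)$ (the Jacobian of the delay-free mass action system); and the modified Jacobian $\tilde J_{ji}=\sum_{\mathbf y\to\mathbf y'}k_{\mathbf y\to\mathbf y'}\mathbf x^{\mathbf y}\frac{y_i}{x_i}(y'_j+y_j)$ for $j\neq i$, and $\tilde J_{ii}=\sum_{\mathbf y\to\mathbf y'}k_{\mathbf y\to\mathbf y'}\mathbf x^{\mathbf y}\frac{y_i}{x_i}(y'_i-y_i)$. A real square matrix is a $P_0$-matrix if all its principal minors are non-negative. *)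

From HB Require Import structures.
From mathcomp Require Import all_boot all_order all_algebra.
From mathcomp Require Import all_classical all_reals all_analysis.
From mathcomp.real_closed Require Import complex.
Set Implicit Arguments. Unset Strict Implicit. Unset Printing Implicit Defensive.
Import Order.TTheory GRing.Theory Num.Theory.
Local Open Scope ring_scope.
Local Open Scope complex_scope.

Section ReactionNetworks.
Variables (R : realType) (n m : nat).

(* A reaction network on n species with m reactions: reaction r is
   y r -> y' r, complexes being vectors in R^n_{>=0}. *)
Definition is_reaction_network (y y' : 'I_m -> 'I_n -> R) : Prop :=
  (forall r i, 0 <= y r i) /\ (forall r i, 0 <= y' r i) /\
  (forall r, exists i, y r i != y' r i) /\
  (forall r s, y r = y s -> y' r = y' s -> r = s).

Definition autocatalytic (c c' : 'I_n -> R) : Prop :=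
  (exists i, c i != 0 /\ c' i != 0) /\
  (forall i, c i != 0 -> c' i != 0 -> c i < c' i).

Definition non_autocatalytic (y y' : 'I_m -> 'I_n -> R) : Prop :=
  forall r, ~ autocatalytic (y r) (y' r).

Definition mono (x c : 'I_n -> R) : R := \prod_(i < n) (x i `^ c i).

(* constant positive solution of the delay mass action system:
   x(t) = x for all t, i.e. the right-hand side vanishes at x *)
Definition is_equilibrium (y y' : 'I_m -> 'I_n -> R) (k : 'I_m -> R)
  (x : 'I_n -> R) : Prop :=
  (forall i, 0 < x i) /\
  (forall j, \sum_(r < m) k r * mono x (y r) * y' r j
             - \sum_(r < m) k r * mono x (y r) * y r j = 0).

Definition cexp (z : R[i]) : R[i] :=
  (expR (complex.Re z))%:C * (cos (complex.Im z) +i* sin (complex.Im z)).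

Definition Jlam (y y' : 'I_m -> 'I_n -> R) (k tau : 'I_m -> R)
  (x : 'I_n -> R) (lam : R[i]) : 'M[R[i]]_n :=
  \matrix_(j, i) \sum_(r < m)
     ((k r * mono x (y r) * (y r i / x i))%:C *
      ((y' r j)%:C * cexp (- lam * (tau r)%:C) - (y r j)%:C)).

Definition Jac (y y' : 'I_m -> 'I_n -> R) (k : 'I_m -> R) (x : 'I_n -> R)
  : 'M[R]_n :=
  \matrix_(j, i) \sum_(r < m) k r * mono x (y r) * (y r i / x i) * (y' r j - y r j).

Definition Jtilde (y y' : 'I_m -> 'I_n -> R) (k : 'I_m -> R) (x : 'I_n -> R)
  : 'M[R]_n :=
  \matrix_(j, i) (if j == i then
       \sum_(r < m) k r * mono x (y r) * (y r i / x i) * (y' r j - y r j)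
     else
       \sum_(r < m) k r * mono x (y r) * (y r i / x i) * (y' r j + y r j)).

End ReactionNetworks.

Definition P0_matrix (R : realFieldType) (n : nat) (A : 'M[R]_n) : Prop :=
  forall S : {set 'I_n},
    0 <= \det (mxsub (@enum_val _ (mem S)) (@enum_val _ (mem S)) A).

From HB Require Import structures.
From mathcomp Require Import all_boot all_order all_algebra.
From mathcomp Require Import all_classical all_reals all_analysis.
From mathcomp.real_closed Require Import complex.
From mathcomp Require perm.
From mathcomp Require Import lra ring.
Set Implicit Arguments. Unset Strict Implicit. Unset Printing Implicit Defensive.
Import Order.TTheory GRing.Theory Num.Theory.
Local Open Scope ring_scope.

(* Suppose Re lam >= 0.  For lam = 0 the characteristic matrix is J, which is
   nonsingular.  Otherwise every delay factor exp (- lam tau) has modulus at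
   most 1, so B = J_lam - lam I is dominated by the Z-matrix M = - J~:
   |B i j| <= - M i j for i != j, and M i i < |B i i|, strictly because
   lam != 0.  Such a B is nonsingular as soon as M is a P0-matrix: the Schur
   complement of B with pivot B 0 0 is dominated in the same way by the Schur
   complement of M taken with the pivot |B 0 0| > M 0 0, whose principal
   minors are nonnegative combinations of those of M since a determinant is
   affine in its corner entry. *)

Lemma split_lshift m n (i : 'I_m) : fintype.split (lshift n i) = inl i.
Proof. exact: (unsplitK (inl i)). Qed.

Lemma split_rshift m n (j : 'I_n) : fintype.split (rshift m j) = inr j.
Proof. exact: (unsplitK (inr j)). Qed.

Local Notation o := (lshift _ (0 : 'I_1)).

Section SchurComplement.
Variable F : fieldType.

Definition schur_compl n (c : F) (A : 'M[F]_(1 + n)) : 'M[F]_n :=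
  drsubmx A - c^-1 *: (dlsubmx A *m ursubmx A).

Lemma schur_complE n c (A : 'M[F]_(1 + n)) i j :
  schur_compl c A i j =
  A (rshift 1 i) (rshift 1 j) - c^-1 * (A (rshift 1 i) o * A o (rshift 1 j)).
Proof. by rewrite !mxE big_ord1 !mxE. Qed.

Lemma block_mx_corner n (A : 'M[F]_(1 + n)) :
  block_mx (A o o)%:M (ursubmx A) (dlsubmx A) (drsubmx A) = A.
Proof.
symmetry; rewrite -{1}[A]submxK; congr block_mx.
by apply/matrixP => i j; rewrite !mxE (ord1 i) (ord1 j) eqxx.
Qed.

Lemma det_block_schur_compl n (c : F) (A : 'M[F]_(1 + n)) : c != 0 ->
  \det (block_mx c%:M (ursubmx A) (dlsubmx A) (drsubmx A)) =
  c * \det (schur_compl c A).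
Proof.
move=> c0; set r := ursubmx A; set s := dlsubmx A; set d := drsubmx A.
have -> : block_mx c%:M r s d =
  block_mx 1%:M 0 (c^-1 *: s) 1%:M *m block_mx c%:M r 0 (schur_compl c A).
  rewrite mulmx_block !mul1mx !mul0mx !addr0 mul_mx_scalar scalerA mulfV //.
  by rewrite scale1r /schur_compl -scalemxAl addrC subrK.
by rewrite det_mulmx det_lblock det_ublock !det1 det_scalar1 !mul1r.
Qed.

Lemma det_block_corner_affine n (a b : F) (r : 'rV[F]_n) (s : 'cV[F]_n) d :
  \det (block_mx a%:M r s d) = \det (block_mx b%:M r s d) + (a - b) * \det d.
Proof.
have -> : \det d = \det (block_mx 1%:M 0 s d) by rewrite det_lblock det1 mul1r.
rewrite -[\det (block_mx b%:M r s d)]mul1r.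
apply: (determinant_multilinear (i0 := o)); apply/matrixP => i j; rewrite !mxE.
- case: (split_ordP j) => j' ->; rewrite !(mxE, split_lshift, split_rshift).
    by rewrite (ord1 j') eqxx mul1r mulr1 addrC subrK.
  by rewrite mul1r mulr0 addr0.
all: have -> : lift o i = rshift 1 i by apply/val_inj.
all: by case: (split_ordP j) => j' ->; rewrite !(mxE, split_lshift, split_rshift).
Qed.

Definition pivot_ext k n (f : 'I_k -> 'I_n) (i : 'I_(1 + k)) : 'I_(1 + n) :=
  if fintype.split i is inr j then rshift 1 (f j) else o.

Lemma mxsub_schur_compl k n (f : 'I_k -> 'I_n) c (A : 'M[F]_(1 + n)) :
  mxsub f f (schur_compl c A) =
  schur_compl c (mxsub (pivot_ext f) (pivot_ext f) A).
Proof.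
apply/matrixP => i j; rewrite mxE !schur_complE !mxE /pivot_ext.
by rewrite !split_rshift split_lshift.
Qed.

End SchurComplement.

Definition principal_minors_ge0 (R : numDomainType) n (A : 'M[R]_n) :=
  forall k (f : 'I_k -> 'I_n), 0 <= \det (mxsub f f A).

Lemma det_mxsub_inj (R : comPzRingType) k m (p : 'I_k -> 'I_m) (A : 'M[R]_m) :
  injective p -> k = m -> \det (mxsub p p A) = \det A.
Proof.
move=> p_inj km; subst m.
pose s := perm.perm p_inj.
have -> : mxsub p p A = row_perm s (col_perm s A).
  by apply/matrixP => i j; rewrite !mxE !perm.permE.
rewrite row_permE col_permE !det_mulmx !det_perm perm.odd_permV.
by rewrite mulrC -mulrA -signr_addb addbb mulr1.
Qed.

Lemma P0_matrix_minors (R : realFieldType) n (A : 'M[R]_n) :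
  P0_matrix A -> principal_minors_ge0 A.
Proof.
move=> HA k f; have [f_inj | /injectivePn [i [j ij fij]]] := boolP (injectiveb f);
  last by rewrite (determinant_alternate ij) // => l; rewrite !mxE fij.
move/injectiveP: f_inj => f_inj.
pose S := f @: [set: 'I_k].
have fS i : f i \in S by exact: imset_f.
pose p i := enum_rank_in (fS i) (f i).
have pK i : enum_val (p i) = f i by exact: enum_rankK_in.
have -> : mxsub f f A = mxsub p p (mxsub enum_val enum_val A).
  by apply/matrixP => i j; rewrite !mxE !pK.
rewrite det_mxsub_inj; first exact: HA.
  by move=> i j /(congr1 enum_val); rewrite !pK => /f_inj.
by rewrite card_imset // cardsT card_ord.
Qed.

Lemma principal_minors_ge0_mxsub (R : numDomainType) n k (g : 'I_k -> 'I_n)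
    (A : 'M[R]_n) :
  principal_minors_ge0 A -> principal_minors_ge0 (mxsub g g A).
Proof. by move=> HA l f; rewrite -mxsub_comp; apply: HA. Qed.

Lemma principal_minors_ge0_det (R : numDomainType) n (A : 'M[R]_n) :
  principal_minors_ge0 A -> 0 <= \det A.
Proof. by move=> HA; have := HA n id; rewrite mxsub_eq_id. Qed.

Local Notation normc := (@Normc.normc _).

Section ComplexModulus.
Variable R : rcfType.
Local Open Scope complex_scope.
Implicit Types (a : R) (z : R[i]).

Lemma normc_ge0 z : 0 <= normc z.
Proof. by case: z => a b; rewrite /Normc.normc sqrtr_ge0. Qed.

Lemma normc_real a : normc a%:C = `|a|.
Proof. by rewrite /Normc.normc /= expr0n /= addr0 sqrtr_sqr. Qed.

Lemma normc_sum m (F : 'I_m -> R[i]) :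
  normc (\sum_(r < m) F r) <= \sum_(r < m) normc (F r).
Proof.
elim/big_ind2: _ => [|z1 a1 z2 a2 ? ?|//]; first by rewrite Normc.normc0.
by apply: le_trans (le_normcD _ _) _; apply: lerD.
Qed.

Lemma Re_sum m (F : 'I_m -> R[i]) :
  complex.Re (\sum_(r < m) F r) = \sum_(r < m) complex.Re (F r).
Proof. exact: raddf_sum. Qed.

Lemma Im_sum m (F : 'I_m -> R[i]) :
  complex.Im (\sum_(r < m) F r) = \sum_(r < m) complex.Im (F r).
Proof. exact: raddf_sum. Qed.

Lemma ReB z1 z2 : complex.Re (z1 - z2) = complex.Re z1 - complex.Re z2.
Proof. exact: raddfB. Qed.

Lemma ImB z1 z2 : complex.Im (z1 - z2) = complex.Im z1 - complex.Im z2.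
Proof. exact: raddfB. Qed.

Lemma Re_realM a z : complex.Re (a%:C * z) = a * complex.Re z.
Proof. by case: z => p q; rewrite /= mul0r subr0. Qed.

Lemma Im_realM a z : complex.Im (a%:C * z) = a * complex.Im z.
Proof. by case: z => p q; rewrite /= mul0r addr0. Qed.

Lemma Re_le_normc z : complex.Re z <= normc z.
Proof.
case: z => p q; rewrite /Normc.normc /=; apply: le_trans (ler_norm p) _.
by rewrite -sqrtr_sqr ler_wsqrtr // lerDl sqr_ge0.
Qed.

Lemma normc_gt_Re a z :
  a <= complex.Re z -> a < complex.Re z \/ complex.Im z != 0 -> a < normc z.
Proof.
move=> le_a [lt_a|]; first exact: lt_le_trans lt_a (Re_le_normc z).
case: z le_a => p q /= le_a q_neq0; apply: (le_lt_trans le_a).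
have q2_gt0 : 0 < q ^+ 2 by rewrite exprn_even_gt0.
apply: le_lt_trans (ler_norm p) _.
rewrite /Normc.normc -sqrtr_sqr ltr_sqrt ?ltrDl //.
by apply: ltr_wpDl; first exact: sqr_ge0.
Qed.

End ComplexModulus.

Section Dominance.
Variable R : rcfType.

Section SchurStep.
Variables (n : nat) (M : 'M[R]_(1 + n)) (B : 'M[R[i]]_(1 + n)).
Hypothesis offdiag : forall i j, i != j -> normc (B i j) <= - M i j.
Hypothesis diag : forall i, M i i < normc (B i i).
Local Notation c := (normc (B o o)).

Lemma pivot_normc_gt0 : principal_minors_ge0 M -> 0 < c.
Proof.
move=> HM; apply: le_lt_trans (diag o).
by have := HM 1%N (fun=> o); rewrite det_mx11 mxE.
Qed.

Lemma normc_pivot_path_le i j :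
  normc ((B o o)^-1 * (B (rshift 1 i) o * B o (rshift 1 j))) <=
  c^-1 * (M (rshift 1 i) o * M o (rshift 1 j)).
Proof.
rewrite !Normc.normcM Normc.normcV ler_wpM2l ?invr_ge0 ?normc_ge0 //.
by rewrite -[M _ _ * _]mulrNN ler_pM ?normc_ge0 ?offdiag // eq_sym eq_lrshift.
Qed.

Lemma schur_compl_offdiag_dominated i j : i != j ->
  normc (schur_compl (B o o) B i j) <= - schur_compl c M i j.
Proof.
move=> ij; rewrite !schur_complE; apply: le_trans (le_normcD _ _) _.
rewrite normcN; have := normc_pivot_path_le i j.
have := @offdiag (rshift 1 i) (rshift 1 j); rewrite eq_rshift => /(_ ij).
lra.
Qed.

Lemma schur_compl_diag_dominated i :
  schur_compl c M i i < normc (schur_compl (B o o) B i i).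
Proof.
rewrite !schur_complE; set t := (B o o)^-1 * _.
have := le_normcD (B (rshift 1 i) (rshift 1 i) - t) t; rewrite subrK.
have := normc_pivot_path_le i i; have := diag (rshift 1 i).
lra.
Qed.

Lemma schur_compl_minors_ge0 :
  principal_minors_ge0 M -> principal_minors_ge0 (schur_compl c M).
Proof.
move=> HM k f; have c_gt0 := pivot_normc_gt0 HM.
rewrite mxsub_schur_compl; set A := mxsub _ _ M.
have HA := principal_minors_ge0_mxsub (pivot_ext f) HM.
rewrite -(pmulr_rge0 _ c_gt0) -det_block_schur_compl ?gt_eqF //.
rewrite (det_block_corner_affine _ (A o o)) block_mx_corner.
apply: addr_ge0; first exact: principal_minors_ge0_det.
apply: mulr_ge0.
  by rewrite mxE /pivot_ext split_lshift subr_ge0 ltW.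
by rewrite drsubmxEsub; apply/principal_minors_ge0_det/principal_minors_ge0_mxsub.
Qed.

End SchurStep.

Theorem det_dominated_neq0 n (M : 'M[R]_n) (B : 'M[R[i]]_n) :
  principal_minors_ge0 M ->
  (forall i j, i != j -> normc (B i j) <= - M i j) ->
  (forall i, M i i < normc (B i i)) ->
  \det B != 0.
Proof.
elim: n M B => [|n IH] M B HM offdiag diag; first by rewrite det_mx00 oner_neq0.
have c_gt0 := pivot_normc_gt0 diag HM.
have B_oo_neq0 : B o o != 0.
  by apply: contraTneq c_gt0 => ->; rewrite Normc.normc0 ltxx.
rewrite -[B]block_mx_corner det_block_schur_compl // mulf_neq0 //.
apply: (IH (schur_compl (normc (B o o)) M)).
- exact: schur_compl_minors_ge0.
- exact: schur_compl_offdiag_dominated.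
- exact: schur_compl_diag_dominated.
Qed.

End Dominance.

Section ComplexExponential.
Variable R : realType.
Local Open Scope complex_scope.
Implicit Types z : R[i].

Lemma normc_cexp z : normc (cexp z) = expR (complex.Re z).
Proof.
rewrite Normc.normcM normc_real ger0_norm ?expR_ge0 //.
by rewrite /Normc.normc /= cos2sin2 subrK sqrtr1 mulr1.
Qed.

Lemma cexp0 : cexp 0 = 1 :> R[i].
Proof.
by apply/eqP; rewrite eq_complex /= expR0 cos0 sin0 !mul1r !mul0r subr0 addr0 !eqxx.
Qed.

End ComplexExponential.

Lemma mono_ge0 (R : realType) n (x c : 'I_n -> R) : 0 <= mono x c.
Proof. by apply: prodr_ge0 => i _; exact: powR_ge0. Qed.

Section DelayMassAction.
Variables (R : realType) (n m : nat) (y y' : 'I_m -> 'I_n -> R).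
Variables (k tau : 'I_m -> R) (x : 'I_n -> R).
Local Open Scope complex_scope.

Lemma Jlam0 : Jlam y y' k tau x 0 = map_mx (real_complex R) (Jac y y' k x).
Proof.
apply/matrixP => i j; rewrite !mxE rmorph_sum; apply: eq_bigr => r _.
by rewrite mulNr mul0r oppr0 cexp0 mulr1 -rmorphB -rmorphM.
Qed.

Hypotheses (y_ge0 : forall r i, 0 <= y r i) (y'_ge0 : forall r i, 0 <= y' r i).
Hypotheses (k_gt0 : forall r, 0 < k r) (tau_ge0 : forall r, 0 <= tau r).
Hypothesis x_gt0 : forall i, 0 < x i.

Definition rate_weight r i := k r * mono x (y r) * (y r i / x i).
Local Notation w := rate_weight.

Lemma rate_weight_ge0 r i : 0 <= w r i.
Proof.
by rewrite !mulr_ge0 ?invr_ge0 ?mono_ge0 ?(ltW (k_gt0 r)) ?(ltW (x_gt0 i)).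
Qed.

Variable lam : R[i].
Hypothesis Re_lam_ge0 : 0 <= complex.Re lam.

Definition delay_factor r := cexp (- lam * (tau r)%:C).
Local Notation e := delay_factor.

Lemma normc_delay_le1 r : normc (e r) <= 1.
Proof.
rewrite normc_cexp expR_le1; move: Re_lam_ge0; case: lam => a b /= a_ge0.
by rewrite mulr0 subr0 mulNr oppr_le0 mulr_ge0.
Qed.

Lemma Jlam_offdiag_dominated i j : i != j ->
  normc ((Jlam y y' k tau x lam - lam%:M) i j) <= - (- Jtilde y y' k x) i j.
Proof.
move=> ij; rewrite !mxE (negPf ij) mulr0n subr0 opprK.
apply: le_trans (normc_sum _) _; apply: ler_sum => r _.
rewrite Normc.normcM normc_real ger0_norm ?rate_weight_ge0 //.
apply: ler_wpM2l; first exact: rate_weight_ge0.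
apply: le_trans (le_normcD _ _) _; rewrite normcN Normc.normcM !normc_real.
rewrite !ger0_norm // lerD2r -[leRHS]mulr1 ler_wpM2l //.
exact: normc_delay_le1.
Qed.

Definition delay_loss i := \sum_(r < m) w r i * y' r i * (1 - complex.Re (e r)).

Lemma delay_loss_term_ge0 i r : 0 <= w r i * y' r i * (1 - complex.Re (e r)).
Proof.
apply: mulr_ge0; first exact: mulr_ge0 (rate_weight_ge0 r i) (y'_ge0 r i).
by rewrite subr_ge0; exact: le_trans (Re_le_normc _) (normc_delay_le1 r).
Qed.

Lemma Re_Jlam_diag i :
  complex.Re (Jlam y y' k tau x lam i i) = Jtilde y y' k x i i - delay_loss i.
Proof.
rewrite !mxE eqxx Re_sum -sumrB; apply: eq_bigr => r _.
by rewrite Re_realM ReB Re_realM -/(e r) /w /=; ring.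
Qed.

Lemma Im_Jlam_diag_eq0 i :
  delay_loss i = 0 -> complex.Im (Jlam y y' k tau x lam i i) = 0.
Proof.
move=> /psumr_eq0P loss0; rewrite mxE Im_sum big1 // => r _.
rewrite Im_realM ImB Im_realM -/(e r) [complex.Im (y r i)%:C]/= subr0 mulrA.
have /eqP := loss0 (fun r _ => delay_loss_term_ge0 i r) r isT.
rewrite mulf_eq0 subr_eq0 => /orP[/eqP -> | /eqP Re_e1]; first by rewrite mul0r.
suff -> : complex.Im (e r) = 0 by rewrite mulr0.
apply/eqP; apply: contraTT (normc_delay_le1 r) => Im_neq0.
by rewrite -ltNge; apply: normc_gt_Re; [rewrite -Re_e1 | right].
Qed.

Lemma Jlam_diag_dominated i : lam != 0 ->
  (- Jtilde y y' k x) i i < normc ((Jlam y y' k tau x lam - lam%:M) i i).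
Proof.
move=> lam_neq0; set J := Jlam _ _ _ _ _ _; set Jt := Jtilde _ _ _ _.
rewrite [X in X < _]mxE [X in normc X]mxE [X in normc (_ + X)]mxE.
rewrite [X in normc (_ - X)]mxE eqxx mulr1n.
rewrite -normcN opprB.
have Re_diff : complex.Re (lam - J i i) = complex.Re lam + delay_loss i - Jt i i.
  by rewrite ReB Re_Jlam_diag; ring.
have loss_ge0 : 0 <= delay_loss i by apply: sumr_ge0 => r _; exact: delay_loss_term_ge0.
apply: normc_gt_Re; rewrite Re_diff addrC ?lerDl ?ltrDl ?addr_ge0 //.
have [/eqP|sum_neq0] := eqVneq (complex.Re lam + delay_loss i) 0; last first.
  by left; rewrite lt_def sum_neq0 addr_ge0.
rewrite paddr_eq0 // => /andP[/eqP Re_lam0 /eqP loss0]; right.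
rewrite ImB Im_Jlam_diag_eq0 // subr0.
move: lam_neq0 Re_lam0; case: lam => a b /= ab a0.
by apply: contra ab => /eqP b0; rewrite a0 b0.
Qed.

End DelayMassAction.

Theorem theorem1 (R : realType) (n m : nat)
  (y y' : 'I_m -> 'I_n -> R) (k tau : 'I_m -> R) (x : 'I_n -> R) :
  is_reaction_network y y' ->
  non_autocatalytic y y' ->
  (forall r, 0 < k r) ->
  (forall r, 0 <= tau r) ->
  is_equilibrium y y' k x ->
  \det (Jac y y' k x) != 0 ->
  (forall i, Jtilde y y' k x i i < 0) ->
  P0_matrix (- Jtilde y y' k x) ->
  forall lam : R[i], \det (Jlam y y' k tau x lam - lam%:M) = 0 ->
    complex.Re lam < 0.
Proof.
move=> [y_ge0 [y'_ge0 _]] _ k_gt0 tau_ge0 [x_gt0 _] detJ_neq0 _ P0 lam.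
apply: contraPlt => Re_lam_ge0.
have [->|lam_neq0] := eqVneq lam 0.
  by rewrite raddf0 subr0 Jlam0 det_map_mx; apply/eqP; rewrite fmorph_eq0.
apply/eqP/(det_dominated_neq0 (P0_matrix_minors P0)) => [i j ij|i].
- exact: Jlam_offdiag_dominated.
- exact: Jlam_diag_dominated.
Qed.
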